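(* Let $u,v\in A_N$ be commuting even permutations, viewed as permutation matrices acting on $\mathbb C^N$, and let $T=\langle u,v\rangle$. Then: (1) $T$ satisfies the parity condition (PC) if and only if $u^*(\xi_v)=\xi_v$ and $v^*(\xi_u)=\xi_u$; (2) if $T$ does not satisfy (PC), then $u^*(\xi_v)=-\xi_v$ or $v^*(\xi_u)=-\xi_u$.
   Context: Parity condition (PC) for a group $T$ of permutations of coordinates of $\mathbb C^N$: for every subgroup $T'\subseteq T$, $\dim(\mathbb C^N)^{T'}\equiv N\pmod 2$. For a linear map $w$ let $\mathrm{Fix}(w)$ be its eigenvalue-1 subspace and $M_w$ the sum of its other eigenspaces; $\xi_w$ is a formal generator, and for $v$ commuting with $w$ the action is $v^*(\xi_w)=\det(v|_{M_w})^{-1}\xi_w$. *)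

From HB Require Import structures.
From mathcomp Require Import all_boot all_order all_algebra all_fingroup all_solvable alt all_field.
Set Implicit Arguments. Unset Strict Implicit. Unset Printing Implicit Defensive.
Import GRing.Theory Num.Theory.
Local Open Scope ring_scope.

(* Permutation matrix of s acting on C^N (C = algC, the algebraic complex
   numbers; row-vector convention x |-> x *m perm_mx s). *)
Definition pmx (N : nat) (s : 'S_N) : 'M[algC]_N := perm_mx s.

Definition fixspace (N : nat) (H : {set 'S_N}) : 'M[algC]_N :=
  (\bigcap_(g in H) kermx (pmx g - 1%:M))%MS.

Definition PC (N : nat) (T : {set 'S_N}) : Prop :=
  forall H : {group 'S_N}, H \subset T ->
    odd (\rank (fixspace H)) = odd N.

Definition eig_list (N : nat) (A : 'M[algC]_N) : seq algC :=
  sval (closed_field_poly_normal (char_poly A)).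

Definition Fixsp (N : nat) (w : 'S_N) : 'M[algC]_N := eigenspace (pmx w) 1.
Definition Msp (N : nat) (w : 'S_N) : 'M[algC]_N :=
  (\sum_(a <- undup (eig_list (pmx w)) | a != 1) eigenspace (pmx w) a)%MS.

(* Determinant of the linear map V restricted to the (V-invariant) subspace M,
   computed in the basis row_base M. *)
Definition restr_det (N : nat) (V M : 'M[algC]_N) : algC :=
  \det (row_base M *m V *m pinvmx (row_base M)).

(* v^*(xi_w) = xi_action v w * xi_w, where
   xi_action v w = det(v|_{M_w})^{-1}. *)
Definition xi_action (N : nat) (v w : 'S_N) : algC :=
  (restr_det (pmx v) (Msp w))^-1.

From HB Require Import structures.
From mathcomp Require Import all_boot all_order all_algebra all_fingroup all_solvable alt all_field.
Set Implicit Arguments. Unset Strict Implicit. Unset Printing Implicit Defensive.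
Import GRing.Theory Num.Theory.
Local Open Scope ring_scope.

(* For commuting permutations a and s, the indicator vectors of the orbits of
   a form a basis of Fix(a), which s permutes as it permutes the orbits of a.
   Hence det(s|Fix(a)) is the sign of that permutation of orbits, i.e.
   (-1)^(dim Fix(a) + dim Fix(a, s)), because its cycles correspond to the
   common fixed vectors of a and s.  For even a, dim Fix(a) = N (mod 2), so
   this sign e(a, s) is symmetric, and it is multiplicative in s.  As det u = 1
   and C^N = Fix(v) (+) M_v with both summands u-stable, u^*(xi_v) = e(v, u).
   Finally, every subgroup of the abelian group T = <u, v> is generated by two
   of its elements, so (PC) for T says that e = 1 on T x T, which by symmetry
   and multiplicativity reduces to e(u, v) = 1. *)

Lemma mulmx_perm_mxE (F : fieldType) m n (A : 'M[F]_(m, n)) (s : 'S_n) i j :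
  (A *m perm_mx s) i j = A i (s^-1%g j).
Proof. by rewrite -[s in perm_mx s]invgK -col_permE mxE. Qed.

Lemma perm_mx_mulmxE (F : fieldType) m n (A : 'M[F]_(m, n)) (s : 'S_m) i j :
  (perm_mx s *m A) i j = A (s i) j.
Proof. by rewrite -row_permE mxE. Qed.

Lemma sub_kermxB1 (F : fieldType) m n (x : 'M[F]_(m, n)) (A : 'M_n) :
  (x <= kermx (A - 1%:M))%MS = (x *m A == x).
Proof. by rewrite sub_kermx mulmxBr mulmx1 subr_eq0. Qed.

Lemma porbit_mem_perm n (a : 'S_n) x y : (a y \in porbit a x) = (y \in porbit a x).
Proof. by rewrite porbit_sym -[a y]/((a ^+ 1)%g y) porbit_perm porbit_sym. Qed.

Section PorbitMatrix.
Variables (F : fieldType) (n : nat).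
Implicit Types a s : 'S_n.
Local Notation orb a i := (enum_val (A := porbits a) i).

Definition porbit_mx a : 'M[F]_(#|porbits a|, n) :=
  \matrix_(i, j) (j \in orb a i)%:R.

Definition porbit_rep_mx a : 'M[F]_(n, #|porbits a|) :=
  \matrix_(j, i) (Some j == [pick x in orb a i])%:R.

Lemma orb_inj a i i' x : x \in orb a i -> x \in orb a i' -> i = i'.
Proof.
have [y _ ey] := imsetP (enum_valP i); have [z _ ez] := imsetP (enum_valP i').
move=> xi xi'; apply: enum_val_inj; rewrite ey ez in xi xi' *.
by move: xi xi'; rewrite -!eq_porbit_mem => /eqP <- /eqP <-.
Qed.

Lemma orb_pick a i : exists2 p, [pick x in orb a i] = Some p & p \in orb a i.
Proof.
case: pickP => [p Hp | none]; first by exists p.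
have [y _ ey] := imsetP (enum_valP i).
by move: (none y); rewrite ey porbit_id.
Qed.

Lemma porbit_mx_rep a : porbit_mx a *m porbit_rep_mx a = 1%:M.
Proof.
apply/matrixP => i i'; rewrite !mxE.
have [p Hp pi'] := orb_pick i'.
rewrite (bigD1 p) //= big1 => [|j /negbTE nj]; last first.
  by rewrite !mxE Hp (inj_eq Some_inj) nj mulr0.
rewrite !mxE Hp eqxx mulr1 addr0.
have [->|ne] := eqVneq i i'; first by rewrite pi'.
by have [pi|//] := boolP (p \in orb a i); case/eqP: ne; apply: orb_inj pi pi'.
Qed.

Lemma row_free_porbit_mx a : row_free (porbit_mx a).
Proof. by apply/row_freeP; exists (porbit_rep_mx a); apply: porbit_mx_rep. Qed.

Lemma rank_porbit_mx a : \rank (porbit_mx a) = #|porbits a|.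
Proof. exact/eqP/row_free_porbit_mx. Qed.

Lemma porbit_mx_perm a : porbit_mx a *m perm_mx a = porbit_mx a.
Proof.
apply/matrixP => i j; rewrite mulmx_perm_mxE !mxE.
have [y _ ->] := imsetP (enum_valP i).
by rewrite -{2}(permKV a j) porbit_mem_perm.
Qed.

Lemma kermx_perm_sub_porbit_mx a :
  (kermx (perm_mx a - 1%:M) <= porbit_mx a)%MS.
Proof.
apply/row_subP => k; set x := row k _.
have /eqP xa : x *m perm_mx a == x by rewrite -sub_kermxB1 row_sub.
have x_orbit y z : z \in porbit a y -> x 0 z = x 0 y.
  case/porbitP => m ->; elim: m => [|m IHm]; first by rewrite expg0 perm1.
  by rewrite expgSr permM -IHm -{1}xa mulmx_perm_mxE permK.
suff -> : x = (x *m porbit_rep_mx a) *m porbit_mx a by apply: submxMl.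
apply/matrixP => i0 j; rewrite (ord1 i0) [RHS]mxE.
have jo : porbit a j \in porbits a by apply: imset_f.
pose ij := enum_rank_in jo (porbit a j).
have e_ij : orb a ij = porbit a j by rewrite enum_rankK_in.
rewrite (bigD1 ij) //= big1 => [|i ne]; last first.
  rewrite !mxE; have [ji|_] := boolP (j \in orb a i); last by rewrite mulr0.
  by case/eqP: ne; apply: orb_inj ji _; rewrite e_ij porbit_id.
have [p Hp pij] := orb_pick ij.
rewrite [porbit_mx _ _ _]mxE e_ij porbit_id mulr1 addr0 [(x *m _) _ _]mxE.
rewrite (bigD1 p) //= big1 => [|q /negbTE nq]; last first.
  by rewrite !mxE Hp (inj_eq Some_inj) nq mulr0.
rewrite [porbit_rep_mx _ _ _]mxE Hp eqxx mulr1 addr0.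
by apply/esym/x_orbit; rewrite -e_ij.
Qed.

Lemma porbit_mx_kermx a : (porbit_mx a :=: kermx (perm_mx a - 1%:M))%MS.
Proof.
apply/eqmxP; rewrite kermx_perm_sub_porbit_mx andbT.
by rewrite sub_kermxB1 porbit_mx_perm.
Qed.

Section CommutingPerm.
Variables a s : 'S_n.
Hypothesis cas : commute a s.

Lemma preim_porbit x : [set y | s^-1%g y \in porbit a x] = porbit a (s x).
Proof.
have cm m : commute (a ^+ m)%g s by apply/commute_sym/commuteX/commute_sym.
apply/setP => y; rewrite inE.
apply/porbitP/porbitP => [[m hm]|[m hm]]; exists m.
  by rewrite -(permKV s y) hm -permM (cm m) permM.
by rewrite hm -(permM s) -(cm m) permM permK.
Qed.

Definition porbits_act i : 'I_#|porbits a| :=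
  enum_rank_in (enum_valP i) [set y | s^-1%g y \in orb a i].

Lemma porbits_actE i : orb a (porbits_act i) = [set y | s^-1%g y \in orb a i].
Proof.
rewrite enum_rankK_in //; have [x _ ->] := imsetP (enum_valP i).
by rewrite preim_porbit imset_f.
Qed.

Lemma porbits_act_inj : injective porbits_act.
Proof.
move=> i i' /(congr1 (fun k => orb a k)); rewrite !porbits_actE => /setP e.
by apply: enum_val_inj; apply/setP => y; move: (e (s y)); rewrite !inE permK.
Qed.

Definition porbits_perm : 'S_#|porbits a| := perm porbits_act_inj.

Lemma porbit_mx_comm :
  porbit_mx a *m perm_mx s = perm_mx porbits_perm *m porbit_mx a.
Proof.
apply/matrixP => i j.
by rewrite mulmx_perm_mxE perm_mx_mulmxE !mxE [porbits_perm i]permE porbits_actE inE.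
Qed.

End CommutingPerm.
End PorbitMatrix.

Section RestrDet.
Variable N : nat.
Implicit Types V M W : 'M[algC]_N.

Lemma restr_det_basis r (B : 'M[algC]_(r, N)) (A : 'M_r) V M :
  row_free B -> (B :=: M)%MS -> B *m V = A *m B -> restr_det V M = \det A.
Proof.
move=> freeB eBM BV; have r_rank : r = \rank M by rewrite -(eqP freeB) eBM.
subst r; set rb := row_base M.
have stM : (M *m V <= M)%MS by rewrite -(eqmxMr V eBM) -eBM BV submxMl.
have rbV : rb *m V = conjmx rb V *m rb.
  by rewrite /conjmx mulmxKpV // stablemx_row_base.
pose C := B *m pinvmx rb.
have BC : B = C *m rb by rewrite mulmxKpV // eq_row_base eBM.
have CA : C *m conjmx rb V = A *m C.
  apply: (row_free_inj (row_base_free M)).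
  by rewrite -mulmxA -rbV mulmxA -BC BV BC mulmxA.
have unitC : C \in unitmx.
  rewrite -row_free_unit /row_free eqn_leq rank_leq_row /=.
  by rewrite -{1}(eqP freeB) BC mxrankM_maxl.
have detC : \det C != 0 by rewrite -unitfE -unitmxE.
by move/(congr1 determinant): CA; rewrite !det_mulmx mulrC => /(mulIf detC).
Qed.

Lemma restr_detM V V' M : (M *m V <= M)%MS -> (M *m V' <= M)%MS ->
  restr_det (V *m V') M = restr_det V M * restr_det V' M.
Proof.
move=> stV stV'; rewrite /restr_det.
by rewrite -[_ *m _ *m pinvmx _]/(conjmx _ _) conjmxM ?det_mulmx // inE stablemx_row_base.
Qed.

Lemma restr_det1 M : restr_det 1%:M M = 1.
Proof.
rewrite /restr_det -[_ *m _ *m pinvmx _]/(conjmx _ _).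
by rewrite conjmx_scalar ?det1 ?row_base_free.
Qed.

Lemma det_restr_det_sum V W M : (W *m V <= W)%MS -> (M *m V <= M)%MS ->
  (W + M :=: 1%:M)%MS -> (\rank W + \rank M = N)%N ->
  \det V = restr_det V W * restr_det V M.
Proof.
move=> stW stM WM1 rankWM.
pose B := col_mx (row_base W) (row_base M).
pose A := block_mx (conjmx (row_base W) V) 0 0 (conjmx (row_base M) V).
have B1 : (B :=: 1%:M)%MS.
  apply: eqmx_trans (eqmx_sym (addsmxE _ _)) _.
  exact: eqmx_trans (adds_eqmx (eq_row_base W) (eq_row_base M)) WM1.
have restr_det_full : restr_det V 1%:M = \det V.
  apply: (restr_det_basis (B := 1%:M)) => //.
  - by rewrite row_free_unit unitmx1.
  - by rewrite mul1mx mulmx1.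
rewrite -restr_det_full (restr_det_basis (B := B) (A := A)) ?det_ublock //.
  by rewrite /row_free B1 mxrank1 rankWM.
rewrite mul_col_mx mul_block_col !mul0mx addr0 add0r.
by rewrite /conjmx !mulmxKpV // stablemx_row_base.
Qed.

End RestrDet.

Section FixedSpaces.
Variable N : nat.
Implicit Types (a s g : 'S_N) (S : {set 'S_N}).

Lemma fixspace1 a : fixspace [set a] = kermx (pmx a - 1%:M).
Proof. by rewrite /fixspace big_set1. Qed.

Lemma sub_fixspaceP S m (x : 'M[algC]_(m, N)) :
  reflect {in S, forall g, x *m pmx g = x} (x <= fixspace S)%MS.
Proof.
apply: (iffP sub_bigcapmxP) => xS g gS; first by apply/eqP; rewrite -sub_kermxB1 xS.
by rewrite sub_kermxB1 xS.
Qed.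

Lemma fixspace_fix S g : g \in S -> fixspace S *m pmx g = fixspace S.
Proof. exact/sub_fixspaceP. Qed.

Lemma fixspace_gen S : (fixspace <<S>>%g :=: fixspace S)%MS.
Proof.
apply/eqmxP/andP; split.
  by apply/sub_fixspaceP => g gS; apply/fixspace_fix/mem_gen.
have fixG : group_set [set g | fixspace S *m pmx g == fixspace S].
  apply/group_setP; split; first by rewrite inE /pmx perm_mx1 mulmx1.
  by move=> x y; rewrite !inE /pmx perm_mxM mulmxA => /eqP -> /eqP ->.
have /subsetP genS : (<<S>> \subset Group fixG)%g.
  by rewrite gen_subG; apply/subsetP => g gS; rewrite inE fixspace_fix.
by apply/sub_fixspaceP => g /genS; rewrite inE => /eqP.
Qed.

Lemma rank_fixspace1 a : \rank (fixspace [set a]) = #|porbits a|.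
Proof. by rewrite fixspace1 -(porbit_mx_kermx _ a) rank_porbit_mx. Qed.

Lemma odd_rank_fixspace1 a : a \in ('Alt_('I_N))%g ->
  odd (\rank (fixspace [set a])) = odd N.
Proof.
rewrite Alt_even /odd_perm card_ord rank_fixspace1.
by case: (odd N); case: (odd #|porbits a|).
Qed.

Section Commuting.
Variables a s : 'S_N.
Hypothesis cas : commute a s.
Let p := porbits_perm cas.

Lemma fixspace2_porbit_mx :
  (kermx (perm_mx p - 1%:M) *m porbit_mx algC a :=: fixspace [set a; s])%MS.
Proof.
set K := kermx _; have /eqP Kp : K *m perm_mx p == K by rewrite -sub_kermxB1.
apply/eqmxP/andP; split.
  apply/sub_fixspaceP => g /set2P [->|->]; rewrite -mulmxA.
    by rewrite porbit_mx_perm.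
  by rewrite porbit_mx_comm mulmxA Kp.
set F := fixspace _.
have Fa : (F <= porbit_mx algC a)%MS.
  by rewrite porbit_mx_kermx sub_kermxB1 fixspace_fix ?set21.
have Fs : F *m pmx s = F by rewrite fixspace_fix ?set22.
rewrite -(mulmxKpV Fa) submxMr // sub_kermxB1; apply/eqP.
apply: (row_free_inj (row_free_porbit_mx _ a)).
by rewrite -mulmxA -porbit_mx_comm mulmxA mulmxKpV // Fs.
Qed.

Lemma rank_fixspace2 : \rank (fixspace [set a; s]) = #|porbits p|.
Proof.
rewrite -fixspace2_porbit_mx mxrankMfree ?row_free_porbit_mx //.
by rewrite -(porbit_mx_kermx algC) rank_porbit_mx.
Qed.

Lemma restr_det_fixspace1 :
  restr_det (pmx s) (fixspace [set a]) =
  (-1) ^+ (odd (\rank (fixspace [set a])) (+) odd (\rank (fixspace [set a; s]))).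
Proof.
rewrite (restr_det_basis (B := porbit_mx algC a) (A := perm_mx p)).
- by rewrite det_perm /odd_perm card_ord rank_fixspace1 rank_fixspace2.
- exact: row_free_porbit_mx.
- by rewrite fixspace1; apply: porbit_mx_kermx.
- exact: porbit_mx_comm.
Qed.

End Commuting.
End FixedSpaces.

Lemma eig_list_eigenvalue n (A : 'M[algC]_n) a : eigenvalue A a -> a \in eig_list A.
Proof.
rewrite eigenvalue_root_char /eig_list; case: closed_field_poly_normal => r /= ->.
by rewrite (monicP (char_poly_monic A)) scale1r root_prod_XsubC.
Qed.

Lemma diagonalizable_exp1 n (A : 'M[algC]_n) m :
  (0 < m)%N -> A ^+ m = 1 -> diagonalizable A.
Proof.
case: n A => [|n'] A m_gt0 Am1.
  by exists 1%:M; rewrite ?unitmx1 // /similar_to; apply/is_diag_mxP => -[].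
have [z zm] := C_prim_root_exists m_gt0.
apply/diagonalizableP; exists [seq z ^+ i | i <- index_iota 0 m].
  rewrite map_inj_in_uniq ?iota_uniq // => i j.
  rewrite !mem_index_iota => /andP[_ im] /andP[_ jm].
  by move/eqP; rewrite (eq_prim_root_expr zm) !modn_small // => /eqP.
rewrite big_map (factor_Xn_sub_1 zm); apply: mxminpoly_min.
by rewrite rmorphB rmorphXn rmorph1 /= horner_mx_X Am1 subrr.
Qed.

Lemma perm_mxX (R : pzRingType) n (s : 'S_n) m :
  perm_mx (s ^+ m)%g = perm_mx s ^+ m :> 'M[R]_n.
Proof.
elim: m => [|m IHm]; first by rewrite expg0 expr0 perm_mx1.
by rewrite expgS exprS perm_mxM IHm.
Qed.

Section EigenspaceDecomposition.
Variables (N : nat) (v : 'S_N).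

Lemma pmx_diagonalizable : diagonalizable (pmx v).
Proof.
apply: (diagonalizable_exp1 (order_gt0 v)).
by rewrite /pmx -perm_mxX expg_order perm_mx1.
Qed.

Lemma Fixsp_Msp_full : (Fixsp v + Msp v :=: 1%:M)%MS.
Proof.
have [rs _ sum_rs] := (@diagonalizablePeigen _ _ (pmx v)).1 pmx_diagonalizable.
apply/eqmxP; rewrite submx1 -sum_rs /=.
apply: (big_ind (fun X => X <= _)%MS) => [|X Y XS YS|r _]; first exact: sub0mx.
  by rewrite addsmx_sub XS.
have [->|r1] := eqVneq r 1; first exact: addsmxSl.
have [vr|] := boolP (eigenvalue (pmx v) r); last first.
  by rewrite negbK => /eqP ->; apply: sub0mx.
apply: submx_trans (addsmxSr _ _).
by rewrite /Msp (big_rem r) ?mem_undup ?eig_list_eigenvalue //= r1 addsmxSl.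
Qed.

Lemma rank_Fixsp_Msp : (\rank (Fixsp v) + \rank (Msp v))%N = N.
Proof.
rewrite -[RHS](mxrank1 algC) -Fixsp_Msp_full.
set es := [seq a <- undup (eig_list (pmx v)) | a != 1]; set l := 1 :: es.
have ul : uniq l by rewrite /= mem_filter eqxx filter_uniq ?undup_uniq.
have dx : mxdirect (\sum_(i < size l) eigenspace (pmx v) l`_i).
  apply: mxdirect_sum_eigenspace => i j _ _ e; apply/val_inj/eqP.
  by rewrite -(nth_uniq 0 (ltn_ord i) (ltn_ord j) ul) e.
have := mxdirectP dx; rewrite /= big_ord_recl [in X in _ = X]big_ord_recl /=.
move=> rank_sum; apply/eqP; rewrite eqn_leq mxrank_adds_leqif andbT.
rewrite /Msp -big_filter (big_nth 0) big_mkord -/es rank_sum leq_add2l.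
exact: mxrank_sum_leqif.
Qed.

End EigenspaceDecomposition.

Lemma sub_abelian_gen2 (gT : finGroupType) (x y : gT) (H : {group gT}) :
  abelian <<[set x; y]>>%g -> H \subset <<[set x; y]>>%g ->
  exists a b, [/\ a \in H, b \in H & H :=: <<[set a; b]>>%g].
Proof.
move=> abG sHG; have [B genB cardB] := grank_witness H.
have : (#|B| <= 2)%N.
  rewrite cardB grank_abelian ?(abelianS sHG) // (leq_trans (rankS sHG)) //.
  rewrite -grank_abelian // (leq_trans (grank_min _)) // cards2.
  by case: (x != y).
rewrite leq_eqVlt ltnS leq_eqVlt ltnS leqn0 => /or3P[].
- case/cards2P => a [b [_ eB]]; exists a, b; rewrite -eB -genB.
  by split=> //; apply: mem_gen; rewrite eB !inE eqxx ?orbT.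
- case/cards1P => a eB; exists a, a; rewrite setUid -eB -genB.
  by split=> //; apply: mem_gen; rewrite eB set11.
- rewrite cards_eq0 => /eqP B0; exists 1%g, 1%g; rewrite setUid group1.
  by split=> //; rewrite -genB B0 gen0 -set1gE genGid.
Qed.

Section FixDet.
Variable N : nat.
Implicit Types a b c s : 'S_N.

Definition fixdet a s : algC := restr_det (pmx s) (fixspace [set a]).

Lemma fixspace1_stable a s : commute a s ->
  (fixspace [set a] *m pmx s <= fixspace [set a])%MS.
Proof.
move=> cas; apply/sub_fixspaceP => g /set1P ->.
by rewrite -mulmxA /pmx -!perm_mxM -cas perm_mxM mulmxA fixspace_fix ?set11.
Qed.

Lemma fixdet1 a : fixdet a 1 = 1.
Proof. by rewrite /fixdet /pmx perm_mx1 restr_det1. Qed.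

Lemma fixdetM a b c : commute a b -> commute a c ->
  fixdet a (b * c) = fixdet a b * fixdet a c.
Proof. by move=> cab cac; rewrite /fixdet /pmx perm_mxM restr_detM ?fixspace1_stable. Qed.

Lemma fixdet_gen a (S : {set 'S_N}) : S \subset 'C[a]%g ->
  {in S, forall g, fixdet a g = 1} -> {in <<S>>%g, forall g, fixdet a g = 1}.
Proof.
move=> cSa S1.
have kerG : group_set [set g in 'C[a]%g | fixdet a g == 1].
  apply/group_setP; split; first by rewrite inE group1 fixdet1 eqxx.
  move=> g h /setIdP[ga /eqP ga1] /setIdP[ha /eqP ha1].
  by rewrite inE groupM //= fixdetM ?ga1 ?ha1 ?mulr1 //; exact/commute_sym/cent1P.
have /subsetP genS : (<<S>> \subset Group kerG)%g.
  by rewrite gen_subG; apply/subsetP => g gS; rewrite inE (subsetP cSa) ?S1 /=.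
by move=> g /genS; rewrite inE => /andP[_ /eqP].
Qed.

Lemma fixdet_alt a s : a \in ('Alt_('I_N))%g -> commute a s ->
  fixdet a s = (-1) ^+ (odd N (+) odd (\rank (fixspace [set a; s]))).
Proof. by move=> aA cas; rewrite /fixdet restr_det_fixspace1 // odd_rank_fixspace1. Qed.

Lemma xi_action_fixdet u v : u \in ('Alt_('I_N))%g -> commute u v ->
  xi_action u v = fixdet v u.
Proof.
move=> uA cuv; have cvu := commute_sym cuv.
have det_u : \det (pmx u) = 1.
  by move: uA; rewrite Alt_even /pmx det_perm => /negbTE ->.
have Fix_v : Fixsp v = fixspace [set v] by rewrite fixspace1.
have stM : (Msp v *m pmx u <= Msp v)%MS.
  apply: (big_ind (fun X => X *m pmx u <= X)%MS) => [|X Y XS YS|r _].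
  - by rewrite mul0mx sub0mx.
  - by rewrite addsmxMr addsmxS.
  by apply: comm_mx_stable_eigenspace; rewrite /comm_mx /pmx -!perm_mxM cvu.
have := det_restr_det_sum (fixspace1_stable cvu) stM.
rewrite -Fix_v det_u => /(_ (Fixsp_Msp_full v) (rank_Fixsp_Msp v)) det_sum.
have Mu0 : restr_det (pmx u) (Msp v) != 0.
  by apply/eqP => Mu0; move: det_sum; rewrite Mu0 mulr0; apply/eqP; apply: oner_neq0.
by rewrite /xi_action -[_^-1]mul1r det_sum mulfK // /fixdet Fix_v.
Qed.

End FixDet.

Section CommutingEvenPair.
Variables (N : nat) (u v : 'S_N).
Hypotheses (uA : u \in ('Alt_('I_N))%g) (vA : v \in ('Alt_('I_N))%g).
Hypothesis cuv : commute u v.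
Let T := (<<[set u; v]>>)%g.

Lemma pair_abelian : abelian T.
Proof. by rewrite abelian_gen; apply/centsP => x /set2P[]-> y /set2P[]->. Qed.

Lemma pair_sub_Alt : T \subset ('Alt_('I_N))%g.
Proof. by rewrite gen_subG; apply/subsetP => x /set2P[]->. Qed.

Let commT a b : a \in T -> b \in T -> commute a b.
Proof. by move=> aT bT; apply: (centsP pair_abelian). Qed.

Let altT a : a \in T -> a \in ('Alt_('I_N))%g.
Proof. by apply: (subsetP pair_sub_Alt). Qed.

Lemma fixdet_pair a b : a \in T -> b \in T ->
  fixdet a b = (-1) ^+ (odd N (+) odd (\rank (fixspace [set a; b]))).
Proof. by move=> aT bT; apply: fixdet_alt; [apply: altT | apply: commT]. Qed.

Lemma fixdet_pairC a b : a \in T -> b \in T -> fixdet a b = fixdet b a.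
Proof. by move=> aT bT; rewrite !fixdet_pair // setUC. Qed.

Lemma fixdet_pair_id a : a \in T -> fixdet a a = 1.
Proof. by move=> aT; rewrite fixdet_pair // setUid odd_rank_fixspace1 ?altT // addbb. Qed.

Lemma fixdet_pair_gen a : a \in T -> fixdet a u = 1 -> fixdet a v = 1 ->
  {in T, forall b, fixdet a b = 1}.
Proof.
move=> aT au av; apply: fixdet_gen => [|g /set2P[]-> //].
by apply/subsetP => g gS; apply/cent1P; apply: commT => //; apply: mem_gen.
Qed.

Lemma PC_pair : PC T <-> {in T &, forall a b, odd (\rank (fixspace [set a; b])) = odd N}.
Proof.
split=> [PCT a b aT bT | PCab H sHT].
  have sabT : (<<[set a; b]>> \subset T)%g.
    by rewrite gen_subG; apply/subsetP => x /set2P[]->.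
  by rewrite -(PCT _ sabT) fixspace_gen.
have [a [b [aH bH ->]]] := sub_abelian_gen2 pair_abelian sHT.
by rewrite fixspace_gen PCab ?(subsetP sHT).
Qed.

Lemma fixdet_pair_eq1 a b : a \in T -> b \in T ->
  (fixdet a b == 1) = (odd (\rank (fixspace [set a; b])) == odd N).
Proof.
move=> aT bT; rewrite fixdet_pair // -[1]/((-1) ^+ false) (inj_eq signr_inj).
by case: (odd N); case: (odd _).
Qed.

Lemma fixdet_pair_all : fixdet u v = 1 -> {in T &, forall a b, fixdet a b = 1}.
Proof.
have uT : u \in T by rewrite mem_gen ?set21.
have vT : v \in T by rewrite mem_gen ?set22.
move=> uv1 a b aT bT.
have u1 : {in T, forall b, fixdet u b = 1}.
  by apply: fixdet_pair_gen; rewrite ?fixdet_pair_id.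
have v1 : {in T, forall b, fixdet v b = 1}.
  by apply: fixdet_pair_gen; rewrite ?fixdet_pair_id // fixdet_pairC.
by apply: fixdet_pair_gen; rewrite // fixdet_pairC ?u1 ?v1.
Qed.

Lemma PC_pair_fixdet : PC T <-> fixdet u v = 1.
Proof.
apply: iff_trans PC_pair _; split=> [PCab | /fixdet_pair_all uv1 a b aT bT].
  by apply/eqP; rewrite fixdet_pair_eq1 ?PCab // mem_gen ?set21 ?set22.
by apply/eqP; rewrite -fixdet_pair_eq1 ?uv1.
Qed.

Lemma fixdet_pair_sign a b : a \in T -> b \in T -> fixdet a b = 1 \/ fixdet a b = -1.
Proof. by move=> aT bT; rewrite fixdet_pair //; case: (_ (+) _); [right | left]. Qed.

End CommutingEvenPair.

Theorem proposition8 (N : nat) (u v : 'S_N) :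
  u \in ('Alt_('I_N))%g -> v \in ('Alt_('I_N))%g -> commute u v ->
  (PC (<<[set u; v]>>)%g <-> (xi_action u v = 1 /\ xi_action v u = 1)) /\
  (~ PC (<<[set u; v]>>)%g -> (xi_action u v = -1 \/ xi_action v u = -1)).
Proof.
move=> uA vA cuv.
have uT : u \in <<[set u; v]>>%g by rewrite mem_gen ?set21.
have vT : v \in <<[set u; v]>>%g by rewrite mem_gen ?set22.
have PC_uv := PC_pair_fixdet uA vA cuv.
rewrite xi_action_fixdet // xi_action_fixdet ?(commute_sym cuv) //.
rewrite (fixdet_pairC uA vA cuv) //; split.
  by split=> [/PC_uv uv1 | [uv1 _]]; [split | apply/PC_uv].
move=> not_PC; left; have [uv1 | //] := fixdet_pair_sign uA vA cuv uT vT.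
by case: not_PC; apply/PC_uv.
Qed.
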